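(* Let $\mathfrak g$ be a real Lie algebra with a nice basis $\{e_1,\dots,e_n\}$, with root matrix $M_\Delta$ and its mod 2 reduction $M_{\Delta,2}$. Let $D=(d_1,\dots,d_n)\in\mathbb Z^n$, let $\delta\in(\mathbb Z_2)^n$ be its mod 2 reduction, and let $\mathfrak g_D=\operatorname{Span}_{\mathbb R}\mathcal B_D\subset\mathfrak g^{\mathbb C}$, where $\mathcal B_D=\{i^{d_1}e_1,\dots,i^{d_n}e_n\}$. Then: (a) if $M_{\Delta,2}\delta=0$, then $\mathfrak g_D$ is a real Lie subalgebra of $\mathfrak g^{\mathbb C}$ and $\mathcal B_D$ is a nice basis of it; in particular $\mathfrak g$ and $\mathfrak g_D$ have the same root matrix; (b) if $\delta$ is the mod 2 reduction of some $D'\in\mathbb Z^n$ with $M_\Delta D'=0$, then $\mathfrak g_D$ is isomorphic to $\mathfrak g$ as a nice Lie algebra; (c) conversely, if $\mathfrak g_D$ is a real Lie subalgebra of $\mathfrak g^{\mathbb C}$, then $M_{\Delta,2}\delta=0$.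
   Context: A nice basis of a Lie algebra $\mathfrak g$ is a basis $\{e_1,\dots,e_n\}$ (dual basis $\{e^i\}$) such that each $[e_i,e_j]$ is a multiple of some $e_k$ and each $e_i\lrcorner\, de^j$ is a multiple of some $e^k$ ($d$ the Chevalley–Eilenberg differential). The root matrix $M_\Delta$ has one row for each triple $(\{i,j\},k)$ such that $[e_i,e_j]$ is a nonzero multiple of $e_k$, with $+1$ in position $k$, $-1$ in positions $i$ and $j$, and $0$ elsewhere. $\mathfrak g^{\mathbb C}$ is the complexification, $i=\sqrt{-1}$. Two nice Lie algebras are isomorphic as nice Lie algebras if there is a Lie algebra isomorphism mapping each element of one nice basis to a nonzero multiple of an element of the other. *)

(* Real Lie algebras with a distinguished basis are encoded by
   their structure constants; the complexification is C^n = (R[i])^n with the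
   same structure constants. *)
From HB Require Import structures.
From mathcomp Require Import all_boot all_order all_algebra.
From mathcomp Require Import complex.
From mathcomp Require Import Rstruct.

Set Implicit Arguments.
Unset Strict Implicit.
Unset Printing Implicit Defensive.

Import Order.TTheory GRing.Theory Num.Theory.
Local Open Scope ring_scope.

Notation RR := Rdefinitions.R.

(* Structure constants: [e_i, e_j] = \sum_k c i j k e_k. *)
Definition sconst (F : Type) (n : nat) := 'I_n -> 'I_n -> 'I_n -> F.

Definition sc_bracket (F : pzRingType) (n : nat) (c : sconst F n)
  (x y : 'rV[F]_n) : 'rV[F]_n :=
  \row_k \sum_(i < n) \sum_(j < n) x 0 i * y 0 j * c i j k.

(* c defines a Lie algebra: the bracket (bilinear by construction) is
   alternating and satisfies the Jacobi identity. *)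
Definition is_lie_sc (F : pzRingType) (n : nat) (c : sconst F n) : Prop :=
  (forall x, sc_bracket c x x = 0) /\
  (forall x y z, sc_bracket c x (sc_bracket c y z)
                 + sc_bracket c y (sc_bracket c z x)
                 + sc_bracket c z (sc_bracket c x y) = 0).

(* The 1-form e_i _| de^j, as the function b |-> (e_i _| de^j)(e_b)
   = de^j(e_i, e_b) = - e^j([e_i, e_b]) (Chevalley-Eilenberg differential). *)
Definition interior_de (F : pzRingType) (n : nat) (c : sconst F n)
  (i j : 'I_n) : 'I_n -> F := fun b => - c i b j.

Definition nice_sc (F : pzRingType) (n : nat) (c : sconst F n) : Prop :=
  (forall i j : 'I_n, exists k : 'I_n, forall k', k' != k -> c i j k' = 0) /\
  (forall i j : 'I_n, exists k : 'I_n, forall b, b != k -> interior_de c i j b = 0).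

(* Triples ({i,j},k) with [e_i,e_j] a nonzero multiple of e_k; the unordered
   pair {i,j} is represented by (i,j) with i < j. *)
Definition rootset (F : pzRingType) (n : nat) (c : sconst F n)
  : {set ('I_n * 'I_n) * 'I_n} :=
  [set t : ('I_n * 'I_n) * 'I_n | (t.1.1 < t.1.2)%N && (c t.1.1 t.1.2 t.2 != 0)].

Definition root_matrix (F : pzRingType) (n : nat) (c : sconst F n)
  : 'M[int]_(#|rootset c|, n) :=
  \matrix_(r < #|rootset c|, l < n)
     let t := enum_val r in
     (((l == t.2) : nat)%:Z - ((l == t.1.1) : nat)%:Z - ((l == t.1.2) : nat)%:Z).

Definition mod2 (z : int) : 'Z_2 := z%:~R.
Definition root_matrix2 (F : pzRingType) (n : nat) (c : sconst F n)
  : 'M['Z_2]_(#|rootset c|, n) := map_mx mod2 (root_matrix c).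
Definition red2 (n : nat) (D : 'cV[int]_n) : 'cV['Z_2]_n := map_mx mod2 D.

Definition csc (R : rcfType) (n : nat) (c : sconst R n) : sconst R[i] n :=
  fun i j k => (c i j k)%:C%C.

Definition bD (R : rcfType) (n : nat) (D : 'cV[int]_n) (k : 'I_n) : 'rV[R[i]]_n :=
  (('i%C : R[i]) ^ (D k 0)) *: delta_mx 0 k.

Definition realcomb (R : rcfType) (n : nat) (D : 'cV[int]_n) (r : 'I_n -> R)
  : 'rV[R[i]]_n := \sum_(k < n) (r k)%:C%C *: bD R D k.

Definition in_gD (R : rcfType) (n : nat) (D : 'cV[int]_n) (x : 'rV[R[i]]_n) : Prop :=
  exists r : 'I_n -> R, x = realcomb D r.
Arguments in_gD R {n} D x.

Definition real_subalgebra (R : rcfType) (n : nat) (c : sconst R n)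
  (D : 'cV[int]_n) : Prop :=
  in_gD R D 0 /\
  (forall x y, in_gD R D x -> in_gD R D y -> in_gD R D (x + y)) /\
  (forall (a : R) x, in_gD R D x -> in_gD R D (a%:C%C *: x)) /\
  (forall x y, in_gD R D x -> in_gD R D y -> in_gD R D (sc_bracket (csc c) x y)).

(* Conclusion of (a): g_D is a real Lie subalgebra, B_D is a basis of it
   (it spans by definition; it is R-linearly independent), B_D is nice, i.e.
   the structure constants c' of g_D in the basis B_D satisfy nice_sc, and the
   root matrix of (g_D, B_D) is that of (g, {e_i}). *)
Definition part_a (R : rcfType) (n : nat) (c : sconst R n) (D : 'cV[int]_n) : Prop :=
  real_subalgebra c D /\
  (forall r : 'I_n -> R, realcomb D r = 0 -> forall k, r k = 0) /\
  exists c' : sconst R n,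
    (forall i j : 'I_n,
       sc_bracket (csc c) (bD R D i) (bD R D j)
       = \sum_(k < n) (c' i j k)%:C%C *: bD R D k) /\
    nice_sc c' /\
    exists E : #|rootset c'| = #|rootset c|,
      castmx (E, erefl n) (root_matrix c') = root_matrix c.

Definition nice_iso_gD (R : rcfType) (n : nat) (c : sconst R n) (D : 'cV[int]_n) : Prop :=
  exists (f : 'I_n -> 'I_n) (lam : 'I_n -> R),
    (forall i, lam i != 0) /\
    let phi := fun x : 'rV[R]_n =>
                 \sum_(i < n) (x 0 i * lam i)%:C%C *: bD R D (f i) in
    injective phi /\
    (forall y, in_gD R D y <-> exists x, y = phi x) /\
    (forall x y, phi (sc_bracket c x y) = sc_bracket (csc c) (phi x) (phi y)).

(* For the basis vectors b_k = i^(d_k) e_k of g_D one has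
   [b_a, b_b] = c_ab^l i^(d_a + d_b - d_l) b_l, and i^m is real exactly when m
   is even.  Hence g_D is closed under the bracket iff d_a + d_b - d_l is even
   for every root ({a,b},l), which is the condition M_{Delta,2} delta = 0; the
   structure constants of B_D are then the c_ab^l up to signs, so B_D is nice
   with the same roots.  If moreover D' = D mod 2 and M_Delta D' = 0, then
   e_l |-> i^(d'_l) e_l = +-b_l preserves every structure constant. *)

From HB Require Import structures.
From mathcomp Require Import all_boot all_order all_algebra.
From mathcomp Require Import complex.
From mathcomp Require Import Rstruct.
From mathcomp Require Import ring zify.
Import Order.TTheory GRing.Theory Num.Theory.
Local Open Scope ring_scope.

Set Implicit Arguments.
Unset Strict Implicit.
Unset Printing Implicit Defensive.

Lemma modz2_cases (z : int) : (z %% 2 = 0 \/ z %% 2 = 1)%Z.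
Proof.
have := modz_ge0 z (isT : (2 : int) != 0); have := ltz_pmod z (isT : (0 : int) < 2).
lia.
Qed.

Lemma mod2_eq0 (z : int) : (mod2 z == 0) = (2 %| z)%Z.
Proof.
rewrite /mod2 {1}(divz_eq z 2) intrD intrM.
have -> : (2%:~R : 'Z_2) = 0 by apply/eqP.
rewrite mulr0 add0r (sameP dvdz_mod0P eqP).
by case: (modz2_cases z) => ->.
Qed.

Lemma eq_red2_mod2B (n : nat) (D D' : 'cV[int]_n) :
  red2 D' = red2 D -> forall l, mod2 (D' l 0 - D l 0) = 0.
Proof.
by move=> /matrixP e l; have := e l 0; rewrite !mxE /mod2 intrB => ->; rewrite subrr.
Qed.

Section ImaginaryUnitPowers.
Variable R : rcfType.
Local Notation ii := ('i%C : R[i]).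

Lemma i_neq0 : ii != 0.
Proof. by rewrite eq_complex /= oner_eq0 andbF. Qed.

Lemma expi_even (q : int) : ii ^ (q * 2) = ((-1) ^ q)%:C%C.
Proof.
rewrite mulrC -exprz_exp (rmorphXz _ _ (unitrN1 R)) rmorphN1.
by congr (_ ^ q); rewrite /exprz /= sqr_i.
Qed.

Lemma expi_realE (z : int) : mod2 z = 0 -> (complex.Re (ii ^ z))%:C%C = ii ^ z.
Proof. by move/eqP; rewrite mod2_eq0 => /dvdzP[q ->]; rewrite expi_even. Qed.

Lemma Re_expi_neq0 (z : int) : mod2 z = 0 -> complex.Re (ii ^ z) != 0.
Proof.
by move/expi_realE=> e; rewrite -(inj_eq (@complexI R)) e rmorph0 expfz_neq0 ?i_neq0.
Qed.

Lemma expi_real_mod2 (z : int) (s : R) : ii ^ z = s%:C%C -> mod2 z = 0.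
Proof.
case: (modz2_cases z) => [/dvdz_mod0P | z_odd]; first by rewrite -mod2_eq0 => /eqP.
rewrite (divz_eq z 2) z_odd expfzDr ?i_neq0 // expi_even.
move=> /(congr1 (@complex.Im R)); rewrite ImiRe /= => /eqP.
by rewrite expfz_eq0 oppr_eq0 oner_eq0 andbF.
Qed.

End ImaginaryUnitPowers.

Section StructureConstants.
Variables (F : pzRingType) (n : nat).
Implicit Types (c : sconst F n) (x y z : 'rV[F]_n).

Lemma sc_bracketDl c x y z :
  sc_bracket c (x + y) z = sc_bracket c x z + sc_bracket c y z.
Proof.
apply/rowP => k; rewrite !mxE -big_split; apply: eq_bigr => i _.
by rewrite -big_split; apply: eq_bigr => j _; rewrite mxE !mulrDl.
Qed.

Lemma sc_bracketDr c x y z :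
  sc_bracket c x (y + z) = sc_bracket c x y + sc_bracket c x z.
Proof.
apply/rowP => k; rewrite !mxE -big_split; apply: eq_bigr => i _.
by rewrite -big_split; apply: eq_bigr => j _; rewrite mxE mulrDr !mulrDl.
Qed.

Lemma sc_bracket_delta c (u v : F) a b :
  sc_bracket c (u *: delta_mx 0 a) (v *: delta_mx 0 b) = \row_k (u * v * c a b k).
Proof.
apply/rowP => k; rewrite !mxE (big_only1 a) // => [|i /negbTE ia _]; last first.
  by apply: big1 => j _; rewrite !mxE ia andbF mulr0 !mul0r.
rewrite (big_only1 b) // => [|j /negbTE jb _]; last by rewrite !mxE jb andbF !mulr0 mul0r.
by rewrite !mxE !eqxx !mulr1.
Qed.

Section Alternating.
Variable c : sconst F n.
Hypothesis c_alt : forall x, sc_bracket c x x = 0.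

Lemma sconst_diag a k : c a a k = 0.
Proof.
by have /rowP/(_ k) := c_alt (1 *: delta_mx 0 a); rewrite sc_bracket_delta !mxE !mul1r.
Qed.

Lemma sconst_anti a b k : c b a k = - c a b k.
Proof.
have /rowP/(_ k) := c_alt (1 *: delta_mx 0 a + 1 *: delta_mx 0 b).
rewrite sc_bracketDl !sc_bracketDr !sc_bracket_delta !mxE !mul1r !sconst_diag add0r addr0.
by move/eqP; rewrite addrC addr_eq0 => /eqP.
Qed.

Lemma nz_sconst_of_root_rows (Q : 'I_n -> 'I_n -> 'I_n -> Prop) :
  (forall a b l, Q a b l -> Q b a l) ->
  (forall r : 'I_#|rootset c|, Q (enum_val r).1.1 (enum_val r).1.2 (enum_val r).2) ->
  forall a b l, c a b l != 0 -> Q a b l.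
Proof.
move=> Q_sym Q_rows.
have Q_lt (a b l : 'I_n) : (a < b)%N -> c a b l != 0 -> Q a b l.
  move=> lt_ab c_nz; have t_root : ((a, b), l) \in rootset c by rewrite inE lt_ab.
  by have := Q_rows (enum_rank_in t_root ((a, b), l)); rewrite enum_rankK_in.
move=> a b l c_nz; case: (ltngtP a b) => [lt_ab | lt_ba | /val_inj eq_ab].
- exact: Q_lt.
- by apply/Q_sym/Q_lt; rewrite // sconst_anti oppr_eq0.
- by move: c_nz; rewrite eq_ab sconst_diag eqxx.
Qed.

Lemma root_matrix_mulE (D : 'cV[int]_n) r :
  (root_matrix c *m D) r 0
  = D (enum_val r).2 0 - D (enum_val r).1.1 0 - D (enum_val r).1.2 0.
Proof.
rewrite mxE; under eq_bigr => l _ do rewrite mxE /= !mulrBl.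
have pick a : \sum_(l < n) ((l == a) : nat)%:Z * D l 0 = D a 0.
  rewrite (big_only1 a) ?eqxx ?mul1r // => l /negbTE la _.
  by rewrite la mul0r.
by rewrite !sumrB !pick.
Qed.

Lemma root_matrix_mul_eq0 (D : 'cV[int]_n) :
  root_matrix c *m D = 0 ->
  forall a b l, c a b l != 0 -> D l 0 = D a 0 + D b 0.
Proof.
move=> MD0; apply: nz_sconst_of_root_rows => [a b l ->|r]; first exact: addrC.
have /matrixP/(_ r 0) := MD0; rewrite root_matrix_mulE mxE => /eqP.
by rewrite -addrA -opprD subr_eq0 => /eqP.
Qed.

Lemma root_matrix2_mul_eq0 (D : 'cV[int]_n) :
  root_matrix2 c *m red2 D = 0 <->
  forall a b l, c a b l != 0 -> mod2 (D a 0 + D b 0 - D l 0) = 0.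
Proof.
have rowE r : (root_matrix2 c *m red2 D) r 0
    = - mod2 (D (enum_val r).1.1 0 + D (enum_val r).1.2 0 - D (enum_val r).2 0).
  rewrite /root_matrix2 /red2 -map_mxM mxE root_matrix_mulE.
  by rewrite /mod2 -intrN opprB opprD addrA.
split=> [MD0|D_even].
  apply: nz_sconst_of_root_rows => [a b l|r]; first by rewrite (addrC (D b 0)).
  by apply/eqP; rewrite -oppr_eq0 -rowE MD0 mxE.
apply/matrixP => r k; rewrite ord1 rowE D_even ?oppr0 ?mxE //.
by have := enum_valP r; rewrite inE => /andP[].
Qed.

End Alternating.

Lemma nice_sc_support c c' :
  (forall a b l, c a b l = 0 -> c' a b l = 0) -> nice_sc c -> nice_sc c'.
Proof.
move=> supp [nice_br nice_de]; split=> i j.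
  by have [k hk] := nice_br i j; exists k => k' /hk /supp.
have [k hk] := nice_de i j; exists k => b /hk /eqP.
by rewrite /interior_de oppr_eq0 => /eqP /supp ->; rewrite oppr0.
Qed.

Lemma root_matrix_rootset c c' : rootset c' = rootset c ->
  exists E : #|rootset c'| = #|rootset c|,
    castmx (E, erefl n) (root_matrix c') = root_matrix c.
Proof.
move=> e; have E : #|rootset c'| = #|rootset c| by rewrite e.
exists E; move: E; rewrite /root_matrix; move: (rootset c') e => S e.
by subst S => E; rewrite (eq_irrelevance E erefl) castmx_id.
Qed.

End StructureConstants.

Section RealSpan.
Variables (R : rcfType) (n : nat).
Local Notation ii := ('i%C : R[i]).
Implicit Types (c : sconst R n) (D : 'cV[int]_n) (r s : 'I_n -> R).

Lemma realcombE D r : realcomb D r = \row_l ((r l)%:C%C * ii ^ D l 0).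
Proof.
by rewrite [RHS]row_sum_delta; apply: eq_bigr => k _; rewrite /bD scalerA mxE.
Qed.

Lemma eq_realcomb D r s : r =1 s -> realcomb D r = realcomb D s.
Proof. by move=> e; apply: eq_bigr => k _; rewrite e. Qed.

Lemma realcomb_inj D r s : realcomb D r = realcomb D s -> r =1 s.
Proof.
move=> /rowP e l; move: (e l); rewrite !realcombE !mxE.
by move=> /(mulIf (expfz_neq0 _ (i_neq0 R))) /complexI.
Qed.

Lemma realcomb0 D : realcomb D (fun=> 0 : R) = 0.
Proof. by rewrite realcombE; apply/rowP => l; rewrite !mxE rmorph0 mul0r. Qed.

Lemma realcombD D r s :
  realcomb D r + realcomb D s = realcomb D (fun k => r k + s k).
Proof. by rewrite !realcombE; apply/rowP => l; rewrite !mxE rmorphD mulrDl. Qed.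

Lemma realcombZ D a r : a%:C%C *: realcomb D r = realcomb D (fun k => a * r k).
Proof. by rewrite !realcombE; apply/rowP => l; rewrite !mxE rmorphM mulrA. Qed.

Lemma bD_in_gD D k : in_gD R D (bD R D k).
Proof.
exists (fun l => (l == k)%:R); rewrite realcombE /bD; apply/rowP => l.
rewrite !mxE eqxx /=; case: (eqVneq k l) => [->|_] /=.
  by rewrite mulr1n rmorph1 mulr1 mul1r.
by rewrite mulr0n rmorph0 mulr0 mul0r.
Qed.

(* c' are the structure constants of g^C in the basis B_D, read coordinatewise. *)
Definition sconst_in_bD c D (c' : sconst R n) : Prop :=
  forall a b l,
    ii ^ D a 0 * ii ^ D b 0 * (c a b l)%:C%C = (c' a b l)%:C%C * ii ^ D l 0.

Section ChangeOfBasis.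
Variables (c c' : sconst R n) (D : 'cV[int]_n).
Hypothesis cc' : sconst_in_bD c D c'.

Lemma sc_bracket_bD i j :
  sc_bracket (csc c) (bD R D i) (bD R D j) = realcomb D (c' i j).
Proof. by rewrite /bD sc_bracket_delta realcombE; apply/rowP => l; rewrite !mxE cc'. Qed.

Lemma sc_bracket_realcomb (x y : 'rV[R]_n) :
  sc_bracket (csc c) (realcomb D (x 0)) (realcomb D (y 0))
  = realcomb D (sc_bracket c' x y 0).
Proof.
rewrite !realcombE; apply/rowP => l; rewrite !mxE rmorph_sum mulr_suml.
apply: eq_bigr => a _; rewrite rmorph_sum mulr_suml; apply: eq_bigr => b _.
by rewrite !mxE !rmorphM /csc -[RHS]mulrA -cc'; ring.
Qed.

Lemma real_subalgebra_of_sconst_in_bD : real_subalgebra c D.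
Proof.
split; [|split; [|split]].
- by exists (fun=> 0); rewrite realcomb0.
- by move=> _ _ [r ->] [s ->]; exists (fun k => r k + s k); rewrite realcombD.
- by move=> a _ [r ->]; exists (fun k => a * r k); rewrite realcombZ.
- move=> _ _ [r ->] [s ->]; exists (sc_bracket c' (\row_k r k) (\row_k s k) 0).
  rewrite -sc_bracket_realcomb.
  by congr (sc_bracket _ _ _); apply: eq_realcomb => k; rewrite mxE.
Qed.

End ChangeOfBasis.

Section Twist.
Variables (c : sconst R n) (D : 'cV[int]_n).

(* When d_a + d_b - d_l is even, Re (i^(d_a + d_b - d_l)) = i^(d_a + d_b - d_l) = +-1. *)
Definition twist_sconst : sconst R n :=
  fun a b l => c a b l * complex.Re (ii ^ (D a 0 + D b 0 - D l 0)).

Hypothesis D_even : forall a b l, c a b l != 0 -> mod2 (D a 0 + D b 0 - D l 0) = 0.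

Lemma twist_sconst_in_bD : sconst_in_bD c D twist_sconst.
Proof.
move=> a b l; rewrite /twist_sconst.
have [->|c_nz] := eqVneq (c a b l) 0; first by rewrite mul0r rmorph0 mulr0 mul0r.
rewrite rmorphM /= (expi_realE _ (D_even c_nz)) -[RHS]mulrA.
by rewrite -!expfzDr ?i_neq0 // subrK mulrC.
Qed.

Lemma twist_sconst_eq0 a b l : (twist_sconst a b l == 0) = (c a b l == 0).
Proof.
rewrite /twist_sconst mulf_eq0; have [//|c_nz] /= := eqVneq (c a b l) 0.
by rewrite (negbTE (Re_expi_neq0 _ (D_even c_nz))).
Qed.

Lemma part_a_of_even_roots : nice_sc c -> part_a c D.
Proof.
move=> c_nice; split; first exact: real_subalgebra_of_sconst_in_bD twist_sconst_in_bD.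
split=> [r|]; first by rewrite -(realcomb0 D) => /realcomb_inj.
exists twist_sconst; split; first exact: sc_bracket_bD twist_sconst_in_bD.
split.
  by apply: nice_sc_support c_nice => a b l /eqP; rewrite -twist_sconst_eq0 => /eqP.
by apply: root_matrix_rootset; apply/setP => t; rewrite !inE twist_sconst_eq0.
Qed.

End Twist.

Lemma sconst_in_bD_self c D :
  (forall a b l, c a b l != 0 -> D l 0 = D a 0 + D b 0) -> sconst_in_bD c D c.
Proof.
move=> D_add a b l; have [->|c_nz] := eqVneq (c a b l) 0.
  by rewrite rmorph0 mulr0 mul0r.
by rewrite (D_add _ _ _ c_nz) expfzDr ?i_neq0 // mulrC.
Qed.

Lemma realcomb_rescale D D' (lam r : 'I_n -> R) :
  (forall l, (lam l)%:C%C * ii ^ D l 0 = ii ^ D' l 0) ->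
  realcomb D (fun l => r l * lam l) = realcomb D' r.
Proof.
by move=> lamE; rewrite !realcombE; apply/rowP => l; rewrite !mxE rmorphM -mulrA lamE.
Qed.

Lemma nice_iso_gD_of_sconst_in_bD c D D' :
  sconst_in_bD c D' c -> (forall l, mod2 (D' l 0 - D l 0) = 0) -> nice_iso_gD c D.
Proof.
move=> cD' D'_even; pose lam l := complex.Re (ii ^ (D' l 0 - D l 0)).
have lam_nz l : lam l != 0 by apply: Re_expi_neq0.
have lamE l : (lam l)%:C%C * ii ^ D l 0 = ii ^ D' l 0.
  by rewrite expi_realE // -expfzDr ?i_neq0 // subrK.
exists id, lam; split=> // phi.
have phiE x : phi x = realcomb D' (x 0) by apply: realcomb_rescale.
split; [|split].
- by move=> x y; rewrite !phiE => /realcomb_inj e; apply/rowP.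
- move=> y; split=> [[r ->]|[x ->]]; last by exists (fun l => x 0 l * lam l).
  exists (\row_l (r l / lam l)); apply: eq_realcomb => l.
  by rewrite mxE divfK.
- by move=> x y; rewrite !phiE (sc_bracket_realcomb cD').
Qed.

Lemma real_subalgebra_even_roots c D : real_subalgebra c D ->
  forall a b l, c a b l != 0 -> mod2 (D a 0 + D b 0 - D l 0) = 0.
Proof.
case=> _ [_ [_ br_closed]] a b l c_nz.
have [u /rowP/(_ l)] := br_closed _ _ (bD_in_gD D a) (bD_in_gD D b).
rewrite /bD sc_bracket_delta realcombE !mxE /csc => e.
apply: (@expi_real_mod2 _ _ (u l / c a b l)).
apply: (mulIf (expfz_neq0 (D l 0) (i_neq0 R))).
rewrite -expfzDr ?i_neq0 // subrK expfzDr ?i_neq0 //.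
apply: (mulIf (_ : (c a b l)%:C%C != 0)); first by rewrite (inj_eq (@complexI R)).
by rewrite e mulrAC -rmorphM divfK.
Qed.

End RealSpan.

Theorem proposition1p12 (n : nat) (c : sconst RR n) :
  is_lie_sc c -> nice_sc c ->
  forall D : 'cV[int]_n,
    (root_matrix2 c *m red2 D = 0 -> part_a c D) /\
    ((exists D' : 'cV[int]_n, root_matrix c *m D' = 0 /\ red2 D' = red2 D) ->
       nice_iso_gD c D) /\
    (real_subalgebra c D -> root_matrix2 c *m red2 D = 0).
Proof.
move=> [c_alt _] c_nice D; split; [|split].
- by move/(root_matrix2_mul_eq0 c_alt) => D_even; exact: part_a_of_even_roots.
- case=> D' [/(root_matrix_mul_eq0 c_alt) D'_add /eq_red2_mod2B D'_even].
  exact: nice_iso_gD_of_sconst_in_bD (sconst_in_bD_self D'_add) D'_even.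
- by move/real_subalgebra_even_roots/(root_matrix2_mul_eq0 c_alt).
Qed.
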